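(* There exists a function $f\colon\mathbb{N}\to\mathbb{N}$ such that for every positive integer $n$ and each of the four constructions $Q\in\{Q(\mathscr{M}^{KI}),Q(\mathscr{M}^{KK}),Q(\mathscr{A}^{KK}),Q(\mathscr{H}^{KK})\}$, we have $\mathsf{rw}(Q_{f(n)}(\cdot_{f(n)}))\ge n$, i.e. $\mathsf{rw}(Q_{f(n)}(\mathscr{M}^{KI}_{f(n)}))$, $\mathsf{rw}(Q_{f(n)}(\mathscr{M}^{KK}_{f(n)}))$, $\mathsf{rw}(Q_{f(n)}(\mathscr{A}^{KK}_{f(n)}))$ and $\mathsf{rw}(Q_{f(n)}(\mathscr{H}^{KK}_{f(n)}))$ are all at least $n$.
   Context: Let $X^1,\dots,X^k$ be pairwise disjoint ordered sets $X^j=\{x^j_1,\dots,x^j_m\}$, and let $y^1,\dots,y^k,z^1,\dots,z^{k-1}$ be further distinct vertices. For ordered sets $X,Y$ of size $m$: $\mathcal{M}(X,Y)$ has edges $x_iy_i$, $\mathcal{A}(X,Y)$ has edges $x_iy_j$ ($i\ne j$), $\mathcal{H}(X,Y)$ has edges $x_iy_j$ ($i\le j$); $K(S)$ is the clique on $S$, $K(S,T)$ the complete bipartite graph between $S,T$; unions take unions of vertex and edge sets. Define $Q_k(\mathscr{M}^{KK}_m)=\bigcup_{i\in[k-1]}\mathcal{M}(X^i,X^{i+1})\cup\bigcup_{i\in[k]}K(\{y^i\}\cup X^i)$; $Q_k(\mathscr{M}^{KI}_m)=\bigcup_{i\in[k-1]}\mathcal{M}(X^i,X^{i+1})\cup\bigcup_{i\in[\lceil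 k/2\rceil]}K(\{y^{2i-1}\}\cup X^{2i-1})$; $Q_k(\mathscr{H}^{KK}_m)=\bigcup_{i\in[k-1]}\mathcal{H}(X^i,X^{i+1})\cup\bigcup_{i\in[k]}K(\{y^i\}\cup X^i)$; $Q_k(\mathscr{A}^{KK}_m)=\bigcup_{i\in[k-1]}\mathcal{A}(X^i,X^{i+1})\cup\bigcup_{i\in[k]}K(\{y^i\}\cup X^i)\cup\bigcup_{i\in[k-1]}K(\{z^i\},X^i\cup X^{i+1})$. Rankwidth $\mathsf{rw}(G)$: the cutrank of $X\subseteq V(G)$ is the $\mathbb{F}_2$-rank of the adjacency submatrix with rows $X$ and columns $V(G)\setminus X$; a rank-decomposition is a tree with internal nodes of degree $3$ and a bijection from its leaves to $V(G)$; its width is the maximum over tree edges of the cutrank of the vertices mapped to one side; $\mathsf{rw}(G)$ is the minimum width. *)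

From mathcomp Require Import all_boot all_order all_algebra.
Set Implicit Arguments. Unset Strict Implicit. Unset Printing Implicit Defensive.
Import GRing.Theory.
Local Open Scope ring_scope.

(** * Rank-width of a simple graph (V, adj), adj symmetric irreflexive *)
Section Rankwidth.
Variables (V : finType) (adj : rel V).

Definition cutrank (X : {set V}) : nat :=
  \rank (\matrix_(i < #|X|, j < #|~: X|)
           ((adj (enum_val i) (enum_val j) : nat)%:R : 'F_2)).

Definition tdel (T : finType) (t : rel T) (a b : T) : rel T :=
  [rel x y | t x y && ~~ (((x == a) && (y == b)) || ((x == b) && (y == a)))].

Definition side (T : finType) (t : rel T) (a b : T) : {set T} :=
  [set x | connect (tdel t a b) a x].

Definition degree (T : finType) (t : rel T) (x : T) : nat := #|[set y | t x y]|.

Definition is_rank_decomposition (T : finType) (t : rel T) (phi : V -> T) : Prop :=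
  [/\ symmetric t /\ irreflexive t,
      (forall a b, connect t a b),
      (forall a b, t a b -> ~~ connect (tdel t a b) a b),
      injective phi &
      (forall x, if x \in codom phi then degree t x <= 1 else degree t x == 3)]%N.

Definition rd_width (T : finType) (t : rel T) (phi : V -> T) : nat :=
  \max_(p : T * T | t p.1 p.2) cutrank [set v | phi v \in side t p.1 p.2].

Definition rw_ge (n : nat) : Prop :=
  forall (T : finType) (t : rel T) (phi : V -> T),
    is_rank_decomposition t phi -> (n <= rd_width t phi)%N.

End Rankwidth.

(** Vertices: inl (inl (j,i)) = x^{j+1}_{i+1}; inl (inr j) = y^{j+1};
    inr j = z^{j+1} (only j < k-1 is used).  0-indexed. *)
Definition vtx (k m : nat) := (('I_k * 'I_m) + 'I_k + 'I_k)%type.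

Section Constructions.
Variables k m : nat.

(** clique edges of K({y^j} u X^j) for the j with [sel j] (directed form) *)
Definition clique_e (sel : 'I_k -> bool) (u v : vtx k m) : bool :=
  match u, v with
  | inl (inl (j, i)), inl (inl (j', i')) => (j == j') && (i != i') && sel j
  | inl (inr j), inl (inl (j', _)) => (j == j') && sel j
  | _, _ => false
  end.

Definition layer_e (P : nat -> nat -> bool) (u v : vtx k m) : bool :=
  match u, v with
  | inl (inl (j, i)), inl (inl (j', i')) => (j.+1 == j' :> nat) && P i i'
  | _, _ => false
  end.

(** K({z^j}, X^j u X^{j+1}) for j in [k-1] *)
Definition z_e (u v : vtx k m) : bool :=
  match u, v with
  | inr j, inl (inl (j', _)) => (j < k.-1)%N && ((j' == j :> nat) || (j' == j.+1 :> nat))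
  | _, _ => false
  end.

Definition inV_noz (v : vtx k m) : bool :=
  match v with inr _ => false | _ => true end.
Definition inV_KI (v : vtx k m) : bool :=
  match v with inr _ => false | inl (inr j) => ~~ odd j | _ => true end.
Definition inV_A (v : vtx k m) : bool :=
  match v with inr j => (j < k.-1)%N | _ => true end.

Definition E_MKK u v := layer_e (fun i i' => i == i') u v || clique_e predT u v.
Definition E_MKI u v := layer_e (fun i i' => i == i') u v
                        || clique_e (fun j => ~~ odd j) u v.
Definition E_HKK u v := layer_e (fun i i' => (i <= i')%N) u v || clique_e predT u v.
Definition E_AKK u v := [|| layer_e (fun i i' => i != i') u v, clique_e predT u v
                        | z_e u v].

End Constructions.

Definition QV (k m : nat) (P : pred (vtx k m)) := {v : vtx k m | P v}.
Definition Qadj (k m : nat) (P : pred (vtx k m)) (E : rel (vtx k m)) : rel (QV P) :=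
  fun u v => E (val u) (val v) || E (val v) (val u).

Definition Q_MKI k m := @Qadj k m (@inV_KI k m) (@E_MKI k m).
Definition Q_MKK k m := @Qadj k m (@inV_noz k m) (@E_MKK k m).
Definition Q_AKK k m := @Qadj k m (@inV_A k m) (@E_AKK k m).
Definition Q_HKK k m := @Qadj k m (@inV_noz k m) (@E_HKK k m).
Arguments Q_MKI : clear implicits.
Arguments Q_MKK : clear implicits.
Arguments Q_AKK : clear implicits.
Arguments Q_HKK : clear implicits.

(* Fix a rank-decomposition and weight its leaves by the vertices of the even
   layers (0-indexed) X^0, X^2, ..., X^2e, which carry a clique in all four
   constructions.  Walking along the tree towards the heavier side finds an edge
   whose cut X contains between a third and two thirds of these vertices.
   If at least n even layers meet both X and its complement, one vertex on each
   side from each of them gives an n x n identity submatrix of the cut matrix: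
   layers are cliques and layers two apart are not adjacent.  Otherwise balance
   forces an even layer inside X and another outside, and a closest such pair is
   at most 2n layers apart.  Each of the m >= 4n^2 rows changes side between two
   consecutive layers of that range, so by pigeonhole 2n rows change side at the
   same place; there the edges between the two layers, restricted to these rows,
   form the matrix of =, <= or <> on 2n increasing indices, which has full rank
   over F_2 (for <> because J - I squares to I when 2n is even). *)

From mathcomp Require Import all_boot all_order all_algebra.
From mathcomp Require Import zify.
Set Implicit Arguments. Unset Strict Implicit. Unset Printing Implicit Defensive.
Import GRing.Theory.

Lemma connect_ind (T : finType) (e : rel T) (x : T) (P : T -> Prop) :
  P x -> (forall y z, connect e x y -> P y -> e y z -> P z) ->
  forall y, connect e x y -> P y.
Proof.
move=> Px Pe y /connectP[p + ->]; elim/last_ind: p => [|p z IHp] //=.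
rewrite rcons_path last_rcons => /andP[e_p e_z].
by apply: (Pe (last x p)) (IHp e_p) e_z; apply/connectP; exists p.
Qed.

Section TreeSides.
Variables (T : finType) (t : rel T) (leaf : pred T).
Hypothesis t_sym : symmetric t.
Hypothesis t_irr : irreflexive t.
Hypothesis t_conn : forall a b, connect t a b.
Hypothesis t_bridge : forall a b, t a b -> ~~ connect (tdel t a b) a b.
Hypothesis t_deg : forall x, if leaf x then degree t x <= 1 else degree t x == 3.

Lemma side_refl a b : a \in side t a b.
Proof. by rewrite inE connect0. Qed.

Lemma side_step a b y z : y \in side t a b -> tdel t a b y z -> z \in side t a b.
Proof. by rewrite !inE => a_y /connect1; apply: connect_trans. Qed.

Lemma tdelE a b y z : tdel t a b y z =
  t y z && ~~ (((y == a) && (z == b)) || ((y == b) && (z == a))).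
Proof. by []. Qed.

Lemma side_cover a b x : t a b -> x \in side t a b \/ x \in side t b a.
Proof.
move=> t_ab; elim/connect_ind: x / (t_conn a x) => [|y z _ IHy t_yz].
  by left; apply: side_refl.
have [/orP[]/andP[_ /eqP->]|cut_yz] :=
  boolP (((y == a) && (z == b)) || ((y == b) && (z == a))).
- by right; apply: side_refl.
- by left; apply: side_refl.
by case: IHy => y_side; [left|right]; apply: side_step y_side _;
  rewrite tdelE t_yz // orbC.
Qed.

Lemma side_leaf a b : t a b -> leaf b -> side t b a \subset [set b].
Proof.
move=> t_ab leaf_b; apply/subsetP => x; rewrite !inE.
elim/connect_ind: x / => // y z _ /eqP-> /andP[t_bz].
rewrite eqxx /= => /norP[z_ne_a _].
have := t_deg b; rewrite leaf_b => /card_le1_eqP/(_ z a).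
rewrite !inE t_bz t_sym t_ab => /(_ isT isT) z_a.
by rewrite z_a eqxx in z_ne_a.
Qed.

Lemma side_notin a b : t a b -> b \notin side t a b.
Proof. by move=> t_ab; rewrite inE t_bridge. Qed.

Lemma side_subset a b c : t a b -> t b c -> c != a -> side t c b \subset side t b a.
Proof.
move=> t_ab t_bc c_ne_a; apply/subsetP => x; rewrite [x \in side t c b]inE.
have a_ne_b : a != b by apply: contraTneq t_ab => ->; rewrite t_irr.
elim/connect_ind: x / => [|y z c_y b_y t_yz].
  apply: side_step (side_refl b a) _.
  by rewrite tdelE t_bc (negbTE c_ne_a) andbF (eq_sym b a) (negbTE a_ne_b).
apply: side_step b_y _; rewrite tdelE; move: t_yz; rewrite tdelE => /andP[-> _] /=.
have t_cb : t c b by rewrite t_sym.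
apply/negP => /orP[]/andP[/eqP y_end _]; subst y.
  by rewrite (negbTE (t_bridge t_cb)) in c_y.
case/negP: (t_bridge t_cb); apply: connect_trans c_y (connect1 _).
by rewrite tdelE t_ab (eq_sym a c) (negbTE c_ne_a) (negbTE a_ne_b).
Qed.

Lemma side_proper a b c : t a b -> t b c -> c != a -> side t c b \proper side t b a.
Proof.
move=> t_ab t_bc c_ne_a; rewrite properEneq side_subset // andbT.
by apply/eqP => /setP/(_ b); rewrite side_refl (negbTE (side_notin _)) // t_sym.
Qed.

Lemma side_split a b x : t a b -> x \in side t b a ->
  x = b \/ exists c, [/\ t b c, c != a & x \in side t c b].
Proof.
move=> t_ab; rewrite [x \in side t b a]inE.
elim/connect_ind: x / => [|y z _ [->|[c [t_bc c_ne_a c_y]]] /andP[t_yz cut_yz]].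
- by left.
- right; exists z; split=> //; last exact: side_refl.
  by apply: contra cut_yz => /eqP->; rewrite !eqxx.
have [/orP[]/andP[_ /eqP->]|cut_yz'] :=
  boolP (((y == c) && (z == b)) || ((y == b) && (z == c))); first by left.
  by right; exists c; split=> //; apply: side_refl.
by right; exists c; split=> //; apply: side_step c_y _; rewrite tdelE t_yz.
Qed.

Lemma inner_neighbours a b : t a b -> ~~ leaf b ->
  exists c d, [set y | t b y] :\ a = [set c; d].
Proof.
move=> t_ab inner_b; have := t_deg b; rewrite (negbTE inner_b) /degree.
rewrite (cardsD1 a) inE t_sym t_ab add1n eqSS => /cards2P[c [d [_ ->]]].
by exists c, d.
Qed.

Variable W : {set T}.
Hypothesis W_leaf : forall x, x \in W -> leaf x.
Local Notation weight A := #|W :&: A|.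
Local Notation balanced A := (#|W| <= 3 * weight A <= 2 * #|W|).

Lemma balanced_from_side a b : 2 <= #|W| -> t a b ->
  #|W| <= 3 * weight (side t b a) -> exists a' b', t a' b' /\ balanced (side t a' b').
Proof.
move=> W_ge2; have [s] := ubnP #|side t b a|; elim: s a b => // s IHs a b.
rewrite ltnS => side_le t_ab large_ba.
have [heavy_ba|] := ltnP (2 * #|W|) (3 * weight (side t b a)); last first.
  by exists b, a; rewrite t_sym t_ab large_ba.
have [leaf_b|inner_b] := boolP (leaf b).
  have : weight (side t b a) <= #|[set b]|.
    by rewrite (leq_trans (subset_leq_card (subsetIr _ _))) // subset_leq_card // side_leaf.
  by rewrite cards1; lia.
have [c [d nbr_b]] := inner_neighbours t_ab inner_b.
have nbr (e : T) : e \in [set c; d] -> t b e /\ e != a.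
  by rewrite -nbr_b !inE => /andP[].
have split_weight :
    weight (side t b a) <= weight (side t c b) + weight (side t d b).
  apply: leq_trans (leq_card_setU _ _); apply: subset_leq_card.
  apply/subsetP => x /setIP[W_x /side_split-/(_ t_ab)[x_b|[e [t_be e_ne_a e_x]]]].
    by move: inner_b; rewrite -x_b (W_leaf W_x).
  have : e \in [set c; d] by rewrite -nbr_b !inE e_ne_a.
  by case/set2P=> <-; rewrite !in_setU !in_setI W_x e_x ?orbT.
have recurse (e : T) : e \in [set c; d] -> #|W| <= 3 * weight (side t e b) ->
    exists a' b', t a' b' /\ balanced (side t a' b').
  move=> /nbr[t_be e_ne_a]; apply: IHs => //.
  exact: leq_trans (proper_card (side_proper t_ab t_be e_ne_a)) side_le.
have [|small_c] := leqP #|W| (3 * weight (side t c b)).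
  by apply: recurse; rewrite !inE eqxx.
have [|small_d] := leqP #|W| (3 * weight (side t d b)).
  by apply: recurse; rewrite !inE eqxx orbT.
lia.
Qed.

Lemma balanced_edge : 2 <= #|W| -> exists a b, t a b /\ balanced (side t a b).
Proof.
move=> W_ge2; have [p0 [p1 [_ _ p0_ne_p1]]] := card_gt1P W_ge2.
have [a [b t_ab]] : exists a b, t a b.
  case/connectP: (t_conn p0 p1) => [[|b p]] /=.
    by move=> _ p1_p0; rewrite p1_p0 eqxx in p0_ne_p1.
  by case/andP=> t_p0b _ _; exists p0, b.
have cover : #|W| <= weight (side t a b) + weight (side t b a).
  apply: leq_trans (leq_card_setU _ _); rewrite -setIUr.
  apply/subset_leq_card/subsetP => x W_x; rewrite in_setI W_x in_setU.
  by case: (side_cover x t_ab) => ->; rewrite ?orbT.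
have [large_ba|small_ba] := leqP #|W| (3 * weight (side t b a)).
  exact: balanced_from_side W_ge2 t_ab large_ba.
by apply: (balanced_from_side W_ge2 (_ : t b a)); [rewrite t_sym | lia].
Qed.
End TreeSides.

Lemma rw_ge_of_balanced_cuts (V : finType) (adj : rel V) (J : finType) (g : J -> V) n :
  injective g -> 2 <= #|J| ->
  (forall X : {set V}, #|J| <= 3 * #|[set p | g p \in X]| <= 2 * #|J| ->
     n <= cutrank adj X) ->
  rw_ge adj n.
Proof.
move=> g_inj J_ge2 cut_ge T t phi [[t_sym t_irr] t_conn t_bridge phi_inj t_deg].
have phig_inj : injective (phi \o g) := inj_comp phi_inj g_inj.
set W := [set phi (g p) | p : J].
have W_card : #|W| = #|J| by rewrite card_imset.
have W_leaf x : x \in W -> x \in codom phi by case/imsetP=> p _ ->; apply: codom_f.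
have W_cut (S : {set T}) :
    #|W :&: S| = #|[set p | g p \in [set v | phi v \in S]]|.
  rewrite -(card_imset _ phig_inj); apply: eq_card => x.
  apply/setIP/imsetP => [[/imsetP[p _ ->] S_p]|[p]].
    by exists p; rewrite ?inE.
  by rewrite !inE => S_p ->; split; [apply: imset_f|].
have W_ge2 : 2 <= #|W| by rewrite W_card.
have [a [b [t_ab]]] := @balanced_edge T t (fun x => x \in codom phi) t_sym t_irr
  t_conn t_bridge t_deg W W_leaf W_ge2.
rewrite W_cut W_card => /cut_ge n_le.
exact: leq_trans n_le (leq_bigmax_cond (a, b) t_ab).
Qed.

Section RelationMatrices.
Local Open Scope ring_scope.

Definition rel_mx (T : Type) (R : rel T) m n (u : 'I_m -> T) (v : 'I_n -> T) : 'M['F_2]_(m, n) :=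
  \matrix_(a, b) (R (u a) (v b))%:R.

Lemma mxrank_mxsub_le (F : fieldType) m n m' n' (f : 'I_m' -> 'I_m) (g : 'I_n' -> 'I_n)
    (A : 'M[F]_(m, n)) :
  (\rank (mxsub f g A) <= \rank A)%N.
Proof.
rewrite mxsubrc (leq_trans (mxrankS (rowsub_sub _ _))) //.
by rewrite -mxrank_tr trmx_mxsub -(mxrank_tr A) mxrankS // rowsub_sub.
Qed.

Lemma mxrank_rel_mx_comp (T : Type) (R : rel T) m n m' n' (u : 'I_m -> T) (v : 'I_n -> T)
    (f : 'I_m' -> 'I_m) (g : 'I_n' -> 'I_n) :
  (\rank (rel_mx R (u \o f) (v \o g)) <= \rank (rel_mx R u v))%N.
Proof.
have -> : rel_mx R (u \o f) (v \o g) = mxsub f g (rel_mx R u v).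
  by apply/matrixP => a b; rewrite !mxE.
exact: mxrank_mxsub_le.
Qed.

Lemma tr_rel_mx (T : Type) (R : rel T) m n (u : 'I_m -> T) (v : 'I_n -> T) :
  symmetric R -> (rel_mx R u v)^T = rel_mx R v u.
Proof. by move=> R_sym; apply/matrixP => a b; rewrite !mxE R_sym. Qed.

Lemma mxrank_unitrig (F : fieldType) N (A : 'M[F]_N) :
  (forall a, A a a = 1) -> (forall a b : 'I_N, (a < b)%N -> A a b = 0) -> \rank A = N.
Proof.
move=> A_diag A_trig; apply: mxrank_unit.
rewrite unitmxE det_trig; last exact/is_trig_mxP.
by rewrite big1 ?unitr1 // => a _; rewrite A_diag.
Qed.

Lemma mxrank_neq_F2 N : ~~ odd N ->
  \rank (\matrix_(a, b < N) (a != b)%:R : 'M['F_2]_N) = N.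
Proof.
set A := \matrix_(a, b) _ => N_even.
(* (J - I)^2 = (N - 2) J + I *)
suff /mulmx1_unit[A_unit _] : A *m A = 1%:M by apply: mxrank_unit.
apply/matrixP => a c; rewrite !mxE.
rewrite (eq_bigr (fun b => if (a != b) && (b != c) then 1 else 0)) => [|b _]; last first.
  by rewrite !mxE -natrM mulnb; case: ifP.
rewrite -big_mkcond sumr_const.
have -> : #|[pred b | (a != b) && (b != c)]| = #|~: [set a; c]|.
  by apply: eq_card => b; rewrite !inE negb_or eq_sym.
rewrite -[LHS](@Fp_nat_mod 2) //; have := cardsC [set a; c]; rewrite cards2 card_ord.
by have := ltn_ord a; case: eqVneq => _ /= N_gt0 card_c; congr _%:R; lia.
Qed.
End RelationMatrices.

Section Cutrank.
Variables (V : finType) (adj : rel V).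

Lemma mxrank_rel_mx_le_cutrank (X : {set V}) m n (u : 'I_m -> V) (v : 'I_n -> V) :
  (forall a, u a \in X) -> (forall b, v b \notin X) ->
  \rank (rel_mx adj u v) <= cutrank adj X.
Proof.
move=> uX vX; have vCX b : v b \in ~: X by rewrite inE vX.
pose iu a := enum_rank_in (uX a) (u a); pose iv b := enum_rank_in (vCX b) (v b).
have -> : rel_mx adj u v = rel_mx adj (enum_val \o iu) (enum_val \o iv).
  by apply/matrixP => a b; rewrite !mxE /= !enum_rankK_in.
exact: mxrank_rel_mx_comp.
Qed.

Hypothesis adj_sym : symmetric adj.

Lemma mxrank_rel_mx_le_cutrank_sides (X : {set V}) (s : bool) m n
    (u : 'I_m -> V) (v : 'I_n -> V) :
  (forall a, (u a \in X) = s) -> (forall b, (v b \in X) = ~~ s) ->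
  \rank (rel_mx adj u v) <= cutrank adj X.
Proof.
case: s => uX vX; first by apply: mxrank_rel_mx_le_cutrank => [a|b]; rewrite ?uX ?vX.
rewrite -mxrank_tr tr_rel_mx //.
by apply: mxrank_rel_mx_le_cutrank => [a|b]; rewrite ?uX ?vX.
Qed.

End Cutrank.

Definition full_rank_rel (R : rel nat) N :=
  forall r : 'I_N -> nat, {homo r : a b / a < b} -> \rank (rel_mx R r r) = N.

Section FullRankRelations.
Variables (N : nat) (r : 'I_N -> nat).
Hypothesis r_incr : {homo r : a b / a < b}.

Lemma increasing_mono_leq : {mono r : a b / a <= b}.
Proof.
move=> a b; case: (ltngtP a b) => [a_lt_b|b_lt_a|/val_inj->]; last by rewrite !leqnn.
  by rewrite ltnW // r_incr.
by apply/negbTE; rewrite -ltnNge r_incr.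
Qed.

Lemma increasing_mono_eq : {mono r : a b / a == b}.
Proof. by move=> a b; rewrite eqn_leq !increasing_mono_leq -eqn_leq. Qed.

End FullRankRelations.

Lemma full_rank_rel_eq N : full_rank_rel (fun i j => i == j) N.
Proof.
move=> r r_incr; apply: mxrank_unitrig => [a|a b a_lt_b]; rewrite mxE increasing_mono_eq //.
  by rewrite eqxx.
by rewrite -val_eqE ltn_eqF.
Qed.

Lemma full_rank_rel_leq N : full_rank_rel (fun i j => i <= j) N.
Proof.
move=> r r_incr; rewrite -mxrank_tr.
apply: mxrank_unitrig => [a|a b a_lt_b]; rewrite !mxE increasing_mono_leq //.
  by rewrite leqnn.
by rewrite leqNgt a_lt_b.
Qed.

Lemma full_rank_rel_neq N : ~~ odd N -> full_rank_rel (fun i j => i != j) N.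
Proof.
move=> N_even r r_incr; rewrite -[RHS](mxrank_neq_F2 N_even); congr (\rank _).
by apply/matrixP => a b; rewrite !mxE increasing_mono_eq.
Qed.

Lemma exists_crossing (P : pred nat) lo D : P lo -> ~~ P (lo + D) ->
  exists2 t, t < D & P (lo + t) && ~~ P (lo + t).+1.
Proof.
move=> P_lo; elim: D => [|D IHD]; first by rewrite addn0 P_lo.
rewrite addnS; case P_D: (P (lo + D)) => notP_D1; first by exists D; rewrite ?P_D.
by have [t t_lt_D crossing] := IHD (negbT P_D); exists t => //; apply: ltnW.
Qed.

Lemma pigeonhole (A B : finType) (f : A -> B) c : #|B| * c < #|A| ->
  exists b, c < #|[set a | f a == b]|.
Proof.
move=> card_lt; apply/existsP; apply: contraLR card_lt; rewrite negb_exists => /forallP small.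
rewrite -leqNgt -sum1_card (partition_big f predT) //= -sum_nat_const.
by apply: leq_sum => b _; rewrite sum1dep_card leqNgt small.
Qed.

Lemma enum_val_increasing m c (S : {set 'I_m}) (c_le : c <= #|S|) :
  {homo (fun a : 'I_c => enum_val (widen_ord c_le a)) : a b / a < b}.
Proof.
move=> a b a_lt_b; have x0 := enum_val (widen_ord c_le a).
have lt_trans : transitive (relpre (@nat_of_ord m) ltn) by move=> y x z; apply: ltn_trans.
have enum_sorted : sorted (relpre (@nat_of_ord m) ltn) (enum S).
  rewrite /enum_mem; apply: sorted_filter => //.
  by rewrite -enumT -sorted_map val_enum_ord iota_ltn_sorted.
rewrite !(enum_val_nth x0); apply: (sorted_ltn_nth lt_trans) => //;
  by rewrite inE -cardE (leq_trans (ltn_ord _) c_le).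
Qed.

Lemma increasing_fiber m N c (f : 'I_m -> 'I_N) : N * c.-1 < m ->
  exists t (r : 'I_c -> 'I_m), {homo r : a b / a < b} /\ forall a, f (r a) = t.
Proof.
rewrite -[in X in (X < _)](card_ord N) -[in X in (_ < X)](card_ord m).
move/(pigeonhole f)=> [t fiber_gt].
have c_le : c <= #|[set i | f i == t]| := leq_trans (leqSpred c) fiber_gt.
exists t, (fun a => enum_val (widen_ord c_le a)); split; first exact: enum_val_increasing.
by move=> a; have := enum_valP (widen_ord c_le a); rewrite inE => /eqP.
Qed.

Lemma close_pair N (P Q : pred 'I_N.+1) n : (exists x, P x) -> (exists y, Q y) ->
  #|[set z | ~~ P z && ~~ Q z]| < n ->
  exists x y, [/\ P x, Q y & (x <= y + n) && (y <= x + n)].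
Proof.
move=> [x0 P_x0] [y0 Q_y0] few_neither.
pose dist (q : 'I_N.+1 * 'I_N.+1) := q.1 - q.2 + (q.2 - q.1).
have PQ_0 : P x0 && Q y0 by rewrite P_x0 Q_y0.
case: (@arg_minnP _ (x0, y0) (fun q => P q.1 && Q q.2) dist PQ_0).
move=> -[x y] /andP[/= P_x Q_y] closest.
have between (z : 'I_N.+1) : minn x y < z < maxn x y -> ~~ P z && ~~ Q z.
  move=> z_between; rewrite -negb_or; apply/negP => /orP[P_z|Q_z].
    by have := closest (z, y); rewrite /= P_z Q_y /dist /= => /(_ isT); lia.
  by have := closest (x, z); rewrite /= P_x Q_z /dist /= => /(_ isT); lia.
exists x, y; split=> //; apply: contraLR few_neither => far; rewrite -leqNgt.
pose f (a : 'I_n) : 'I_N.+1 := inord (minn x y + a.+1).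
have fE (a : 'I_n) : f a = minn x y + a.+1 :> nat.
  by rewrite inordK //; have := ltn_ord a; have := ltn_ord x; have := ltn_ord y; lia.
have f_inj : injective f.
  by move=> a b /(congr1 (@nat_of_ord _)); rewrite !fE => ab; apply: val_inj => /=; lia.
rewrite -[n]card_ord -(card_imset _ f_inj); apply/subset_leq_card/subsetP => _ /imsetP[a _ ->].
by rewrite inE; apply: between; rewrite fE; have := ltn_ord a; lia.
Qed.

(* Vertex (j, i) stands for x^(j+1)_(i+1); [pat] gives the edges between
   consecutive layers and [sel] the layers carrying a clique. *)
Definition layered_edge (sel : pred nat) (pat : rel nat) (j i j' i' : nat) :=
  ((j.+1 == j') && pat i i') || ((j == j') && (i != i') && sel j).

Section LayeredGraph.
Variables (V : finType) (adj : rel V) (e m : nat) (xv : nat -> nat -> V).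
Variables (sel : pred nat) (pat : rel nat).
Local Notation k := (2 * e).+1.

Hypothesis adj_sym : symmetric adj.
Hypothesis sel_even : forall j, ~~ odd j -> sel j.
Hypothesis adj_xv : forall j i j' i', j < k -> i < m -> j' < k -> i' < m ->
  adj (xv j i) (xv j' i') = layered_edge sel pat j i j' i' || layered_edge sel pat j' i' j i.
Hypothesis xv_inj : forall j i j' i', j < k -> i < m -> j' < k -> i' < m ->
  xv j i = xv j' i' -> j = j' /\ i = i'.

Definition even_vtx (p : 'I_e.+1 * 'I_m) := xv (2 * p.1) p.2.

Lemma even_layer_lt (x : 'I_e.+1) : 2 * x < k.
Proof. by have := ltn_ord x; lia. Qed.

Lemma adj_even_layer x i i' : i != i' -> adj (even_vtx (x, i)) (even_vtx (x, i')).
Proof.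
move=> i_ne_i'; rewrite adj_xv ?even_layer_lt // /layered_edge eqxx.
by rewrite (val_eqE i i') i_ne_i' sel_even ?orbT // mul2n odd_double.
Qed.

Lemma adj_even_layers_far x y i i' : x != y -> adj (even_vtx (x, i)) (even_vtx (y, i')) = false.
Proof.
move=> x_ne_y; rewrite adj_xv ?even_layer_lt // /layered_edge.
suff [-> -> -> ->] : [/\ ((2 * x).+1 == 2 * y) = false, ((2 * y).+1 == 2 * x) = false,
    (2 * x == 2 * y) = false & (2 * y == 2 * x) = false] by [].
by move: x_ne_y; rewrite -val_eqE /=; split; lia.
Qed.

Lemma adj_next_layer j (i i' : 'I_m) : j.+1 < k -> adj (xv j i) (xv j.+1 i') = pat i i'.
Proof.
move=> j_lt; rewrite adj_xv ?(ltnW j_lt) // /layered_edge eqxx.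
suff [-> -> ->] : [/\ (j.+2 == j) = false, (j == j.+1) = false & (j.+1 == j) = false].
  by rewrite /= !orbF.
by split; lia.
Qed.

Lemma even_vtx_inj : injective even_vtx.
Proof.
move=> [x i] [y i'] /xv_inj[] /=; rewrite ?even_layer_lt //.
by move=> /eqP; rewrite eqn_pmul2l // => /eqP/val_inj-> /val_inj->.
Qed.

Variable n : nat.
Hypothesis e_large : 3 * n <= e.+1.
Hypothesis n_gt0 : 0 < n.
Hypothesis m_large : 4 * n * n <= m.
Hypothesis pat_full : full_rank_rel pat (2 * n).

Let m_gt0 : 0 < m. Proof. by apply: leq_trans m_large; rewrite !muln_gt0 n_gt0. Qed.

Section Cut.
Variable X : {set V}.

Definition layer_full (s : bool) (x : 'I_e.+1) := [forall i, (even_vtx (x, i) \in X) == s].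
Definition split_layers := [set x | ~~ layer_full true x && ~~ layer_full false x].

Lemma split_layer_witness s x : x \in split_layers -> exists i, (even_vtx (x, i) \in X) = s.
Proof.
rewrite inE => /andP[not_in not_out].
case: s; [move: not_out | move: not_in] => /forallPn[i].
  by rewrite eqbF_neg negbK; exists i.
by rewrite eqb_id => /negbTE; exists i.
Qed.

Lemma cutrank_ge_split_layers : n <= #|split_layers| -> n <= cutrank adj X.
Proof.
move=> n_le; pose sp (a : 'I_n) := enum_val (widen_ord n_le a).
have sp_split a : sp a \in split_layers by apply: enum_valP.
have sp_inj : injective sp by move=> a b /enum_val_inj/(congr1 val) /= /val_inj.
have [iu iu_in] := fin_all_exists (fun a => split_layer_witness true (sp_split a)).
have [iv iv_out] := fin_all_exists (fun a => split_layer_witness false (sp_split a)).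
pose u a := even_vtx (sp a, iu a); pose v b := even_vtx (sp b, iv b).
have u_in a : u a \in X by rewrite /u iu_in.
have v_out b : v b \notin X by rewrite /v iv_out.
apply: leq_trans (mxrank_rel_mx_le_cutrank adj u_in v_out); rewrite mxrank_unitrig //.
  move=> a; rewrite mxE adj_even_layer //.
  by apply: contraNneq (v_out a) => iu_iv; rewrite /v -iu_iv u_in.
move=> a b a_lt_b; rewrite mxE adj_even_layers_far //.
by apply: contraTneq a_lt_b => /sp_inj->; rewrite ltnn.
Qed.

Lemma card_layer_vertices_le s : (forall x, ~~ layer_full s x) ->
  #|[set p | (even_vtx p \in X) == s]| <= #|split_layers| * m.
Proof.
move=> not_full; apply: (@leq_trans #|setX split_layers [set: 'I_m]|).
  2: by rewrite cardsX cardsT card_ord.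
apply/subset_leq_card/subsetP => -[x i]; rewrite !inE /= andbT => /eqP vtx_s.
have not_full' : ~~ layer_full (~~ s) x.
  by apply/forallPn; exists i; rewrite vtx_s; case: (s).
by move: not_full' (not_full x); case: (s) => /negbTE-> /negbTE->.
Qed.

Lemma exists_full_layer s : #|split_layers| < n ->
  e.+1 * m <= 3 * #|[set p | even_vtx p \in X]| <= 2 * (e.+1 * m) ->
  exists x, layer_full s x.
Proof.
move=> few_split balanced.
have many_s : e.+1 * m <= 3 * #|[set p | (even_vtx p \in X) == s]|.
  have in_X : [set p | even_vtx p \in X] = [set p | (even_vtx p \in X) == true].
    by apply/setP => p; rewrite !inE eqb_id.
  have out_X : ~: [set p | even_vtx p \in X] = [set p | (even_vtx p \in X) == false].
    by apply/setP => p; rewrite !inE eqbF_neg.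
  have := cardsC [set p | even_vtx p \in X]; rewrite card_prod !card_ord out_X.
  by rewrite in_X in balanced *; case: s; lia.
case: (pickP (layer_full s)) => [x full_x|not_full]; first by exists x.
have := card_layer_vertices_le (fun x => negbT (not_full x)).
have : #|split_layers| * m < n * m by rewrite ltn_pmul2r.
have : 3 * n * m <= e.+1 * m by rewrite leq_mul2r e_large orbT.
lia.
Qed.

Lemma cutrank_ge_crossing s lo D : lo + D < k -> D <= 2 * n ->
  (forall i : 'I_m, (xv lo i \in X) = s) -> (forall i : 'I_m, (xv (lo + D) i \in X) = ~~ s) ->
  2 * n <= cutrank adj X.
Proof.
move=> lo_D_lt D_le lo_s loD_ns.
have crossing (i : 'I_m) : exists t : 'I_(2 * n),
    [/\ t < D, (xv (lo + t) i \in X) = s & (xv (lo + t).+1 i \in X) = ~~ s].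
  have [||t t_lt_D /andP[/eqP cross_s cross_ns]] :=
    @exists_crossing (fun j => (xv j i \in X) == s) lo D.
  - by rewrite /= lo_s.
  - by rewrite /= loD_ns; case: (s).
  exists (Ordinal (leq_trans t_lt_D D_le)); split=> //.
  by move: cross_ns; case: (_ \in X); case: (s).
have [cls cls_cross] := fin_all_exists crossing.
have [|t [r [r_incr r_t]]] := @increasing_fiber m (2 * n) (2 * n) cls.
  by rewrite -subn1; nia.
pose u a := xv (lo + t) (r a); pose v b := xv (lo + t).+1 (r b).
have t_lt_D : t < D.
  have a0 : 'I_(2 * n) by exists 0; rewrite muln_gt0.
  by have [] := cls_cross (r a0); rewrite r_t.
have u_s a : (u a \in X) = s by have [] := cls_cross (r a); rewrite r_t.
have v_ns b : (v b \in X) = ~~ s by have [] := cls_cross (r b); rewrite r_t.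
apply: leq_trans (mxrank_rel_mx_le_cutrank_sides adj_sym u_s v_ns).
have -> : rel_mx adj u v = rel_mx pat (val \o r) (val \o r).
  by apply/matrixP => a b; rewrite !mxE adj_next_layer //; lia.
by rewrite pat_full.
Qed.

Lemma cutrank_ge_full_layers s (x y : 'I_e.+1) : x < y <= x + n ->
  layer_full s x -> layer_full (~~ s) y -> 2 * n <= cutrank adj X.
Proof.
move=> /andP[x_lt_y y_le] /forallP full_x /forallP full_y.
apply: (@cutrank_ge_crossing s (2 * x) (2 * (y - x))) => [||i|i].
- by have := ltn_ord y; lia.
- by lia.
- exact/eqP/full_x.
- by rewrite (_ : 2 * x + 2 * (y - x) = 2 * y); [apply/eqP/full_y | lia].
Qed.

Lemma cutrank_ge_of_balanced :
  e.+1 * m <= 3 * #|[set p | even_vtx p \in X]| <= 2 * (e.+1 * m) ->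
  n <= cutrank adj X.
Proof.
move=> balanced; have [|few_split] := leqP n #|split_layers|.
  exact: cutrank_ge_split_layers.
have full_excl x : layer_full true x -> ~~ layer_full false x.
  move=> /forallP/(_ (Ordinal m_gt0))/eqP in_X.
  by apply/forallPn; exists (Ordinal m_gt0); rewrite in_X.
have [x [y [full_x full_y close]]] := close_pair
  (exists_full_layer true few_split balanced) (exists_full_layer false few_split balanced)
  few_split.
suff : 2 * n <= cutrank adj X by lia.
case: (ltngtP x y) => [x_lt_y|y_lt_x|/val_inj x_eq_y].
- by apply: (@cutrank_ge_full_layers true x y) => //; lia.
- by apply: (@cutrank_ge_full_layers false y x) => //; lia.
- by move: full_y; rewrite -x_eq_y (negbTE (full_excl x full_x)).
Qed.

End Cut.

Lemma layered_rw_ge : rw_ge adj n.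
Proof.
apply: (rw_ge_of_balanced_cuts even_vtx_inj) => [|X]; rewrite card_prod !card_ord.
  by have := m_gt0; nia.
exact: cutrank_ge_of_balanced.
Qed.

End LayeredGraph.

Lemma Qadj_sym k m (P : pred (vtx k m)) (E : rel (vtx k m)) : symmetric (@Qadj k m P E).
Proof. by move=> u v; rewrite /Qadj orbC. Qed.

Section FourConstructions.
Variable e : nat.
Local Notation k := (2 * e).+1.

Definition x_vtx (j i : nat) : vtx k k := inl (inl (inord j, inord i)).

Section XEdges.
Variables (j i j' i' : nat).
Hypotheses (j_lt : j < k) (i_lt : i < k) (j'_lt : j' < k) (i'_lt : i' < k).

Lemma layer_e_x (pat : rel nat) :
  layer_e pat (x_vtx j i) (x_vtx j' i') = (j.+1 == j') && pat i i'.
Proof. by rewrite /layer_e /= !inordK. Qed.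

Lemma clique_e_x (sel : pred 'I_k) :
  clique_e sel (x_vtx j i) (x_vtx j' i') = (j == j') && (i != i') && sel (inord j).
Proof. by rewrite /clique_e /= -!val_eqE /= !inordK. Qed.

Lemma E_MKK_x :
  E_MKK (x_vtx j i) (x_vtx j' i') = layered_edge predT (fun i i' => i == i') j i j' i'.
Proof. by rewrite /E_MKK layer_e_x clique_e_x. Qed.

Lemma E_MKI_x : E_MKI (x_vtx j i) (x_vtx j' i') =
  layered_edge (fun j => ~~ odd j) (fun i i' => i == i') j i j' i'.
Proof. by rewrite /E_MKI layer_e_x clique_e_x /= inordK. Qed.

Lemma E_HKK_x :
  E_HKK (x_vtx j i) (x_vtx j' i') = layered_edge predT (fun i i' => i <= i') j i j' i'.
Proof. by rewrite /E_HKK layer_e_x clique_e_x. Qed.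

Lemma E_AKK_x :
  E_AKK (x_vtx j i) (x_vtx j' i') = layered_edge predT (fun i i' => i != i') j i j' i'.
Proof. by rewrite /E_AKK layer_e_x clique_e_x orbF. Qed.

End XEdges.

Section LayeredQ.
Variables (P : pred (vtx k k)) (E : rel (vtx k k)) (sel : pred nat) (pat : rel nat).
Hypothesis P_x : forall j i, P (inl (inl (j, i))).
Hypothesis E_x : forall j i j' i', j < k -> i < k -> j' < k -> i' < k ->
  E (x_vtx j i) (x_vtx j' i') = layered_edge sel pat j i j' i'.
Hypothesis sel_even : forall j, ~~ odd j -> sel j.

Definition x_vertex (j i : nat) : QV P := exist _ (x_vtx j i) (P_x _ _).

Lemma x_vertex_inj j i j' i' : j < k -> i < k -> j' < k -> i' < k ->
  x_vertex j i = x_vertex j' i' -> j = j' /\ i = i'.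
Proof.
move=> j_lt i_lt j'_lt i'_lt /(congr1 val) [] /(congr1 val) + /(congr1 val).
by rewrite /= !inordK.
Qed.

Lemma Q_rw_ge n : 0 < n -> 3 * n <= e.+1 -> 4 * n * n <= k ->
  full_rank_rel pat (2 * n) -> rw_ge (@Qadj k k P E) n.
Proof.
move=> n_gt0 e_large k_large pat_full.
apply: (@layered_rw_ge _ _ e k x_vertex sel pat (@Qadj_sym k k P E)) => //.
  by move=> j i j' i' *; rewrite /Qadj /= !E_x.
exact: x_vertex_inj.
Qed.

End LayeredQ.
End FourConstructions.

Theorem lemma8p7 :
  exists f : nat -> nat, forall n : nat, (0 < n)%N ->
    [/\ rw_ge (Q_MKI (f n) (f n)) n,
        rw_ge (Q_MKK (f n) (f n)) n,
        rw_ge (Q_AKK (f n) (f n)) n &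
        rw_ge (Q_HKK (f n) (f n)) n].
Proof.
(* 4n^2 + 1 >= 3n even layers for the balance argument, and 4n^2 > 2n(2n - 1)
   rows for the pigeonhole step. *)
exists (fun n => (2 * (4 * n * n)).+1) => n n_gt0.
have e_large : 3 * n <= (4 * n * n).+1 by nia.
have k_large : 4 * n * n <= (2 * (4 * n * n)).+1 by lia.
have two_n_even : ~~ odd (2 * n) by rewrite mul2n odd_double.
split.
- by apply: (Q_rw_ge (fun _ _ => isT) (@E_MKI_x _)) => //; apply: full_rank_rel_eq.
- by apply: (Q_rw_ge (fun _ _ => isT) (@E_MKK_x _)) => //; apply: full_rank_rel_eq.
- by apply: (Q_rw_ge (fun _ _ => isT) (@E_AKK_x _)) => //; apply: full_rank_rel_neq.
- by apply: (Q_rw_ge (fun _ _ => isT) (@E_HKK_x _)) => //; apply: full_rank_rel_leq.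
Qed.
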